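(* Let $G$ be a finite graph with maximum degree $\Delta$ and let $\mathcal{V}=\{V_1,\ldots,V_n\}$ be a partition of $V(G)$ with $|V_i|\ge2\Delta+1$ for all $i$. Then $\mathbf{RG}(\mathcal{I}(G),\mathcal{V})$ is connected.
   Context: $\mathcal{I}(G)$ is the complex of independent sets of $G$. An independent transversal is an independent set of $G$ containing exactly one vertex from each $V_i$. $\mathbf{RG}(\mathcal{I}(G),\mathcal{V})$ is the graph on the independent transversals, two being adjacent if their union is an independent set of size $n+1$. *)

From mathcomp Require Import all_boot.
Set Implicit Arguments. Unset Strict Implicit. Unset Printing Implicit Defensive.

Section Defs.
Variable T : finType.
(* A finite simple graph on vertex set T: e symmetric and irreflexive
   (imposed as hypotheses in the theorem). *)
Variable e : rel T.

Definition nbhd (x : T) : {set T} := [set y | e x y].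
Definition degree (x : T) : nat := #|nbhd x|.
Definition maxdeg : nat := \max_(x : T) degree x.

(* independent sets of G, i.e. faces of the complex I(G) *)
Definition independent (S : {set T}) : bool :=
  [forall x in S, forall y in S, ~~ e x y].

Definition indep_transversal (P : {set {set T}}) (S : {set T}) : bool :=
  independent S && [forall B in P, #|S :&: B| == 1].

Definition RG_adj (P : {set {set T}}) (S S' : {set T}) : bool :=
  independent (S :|: S') && (#|S :|: S'| == #|P|.+1).

Definition RG_connected (P : {set {set T}}) : Prop :=
  forall S S', indep_transversal P S -> indep_transversal P S' ->
    exists p : seq {set T},
      [/\ path (RG_adj P) S p, last S p = S' & all (indep_transversal P) p].
End Defs.

(* Induct on |R :\: S| for independent transversals R and S, and write
   R = A :|: C, S = A' :|: C with C = R :&: S.  If the block of some a in A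
   contains a vertex w with no neighbour in R :|: S, then moving R from a to w
   and afterwards trading, block by block, each vertex of R that sees S for the
   vertex of S brings R strictly closer to S.  Such a w is found by Haxell's
   alternating-chain argument, in which the common part C may change as well.
   The vertices of A and the blockers c_i of the chain lie in distinct blocks,
   and A, A' and the chain together have at most twice as many vertices, each
   of degree at most maxdeg; so a block of size 2 * maxdeg + 1 contains a
   vertex w with no neighbour among them.  Either w sees C and extends the
   chain by a new pair (w, c), or w can be swapped into C for some c_i, which
   lowers the number of neighbours in C of the chain vertex y_i.  These numbers
   decrease lexicographically, so the process terminates. *)

From mathcomp Require Import all_boot zify.
Set Implicit Arguments. Unset Strict Implicit. Unset Printing Implicit Defensive.

Section Lexnum.
Variable b : nat.

Fixpoint lexnum n (f : nat -> nat) : nat :=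
  if n is n'.+1 then f 0 * b ^ n' + lexnum n' (f \o succn) else 0.

Definition lex_below n (f g : nat -> nat) :=
  exists p, [/\ p < n, forall m, m < p -> f m <= g m & f p < g p].

Lemma lexnum_bound n f : (forall m, f m < b) -> lexnum n f < b ^ n.
Proof.
elim: n f => [|n IHn] f f_lt //=; have := IHn (f \o succn) (fun m => f_lt m.+1).
by have := f_lt 0; rewrite expnS; nia.
Qed.

Lemma lexnum_lt n f g : (forall m, f m < b) -> lex_below n f g ->
  lexnum n f < lexnum n g.
Proof.
elim: n f g => [|n IHn] f g f_lt [[|p] [//= lt_pn le_fg lt_fg]] /=.
  by have := @lexnum_bound n (f \o succn) (fun m => f_lt m.+1); nia.
have : lexnum n (f \o succn) < lexnum n (g \o succn).
  apply: IHn => [m|]; first exact: f_lt.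
  by exists p; split=> // m lt_mp; apply: (le_fg m.+1).
by have := le_fg 0 isT; nia.
Qed.

Lemma lex_below_widen n n' f g h : n <= n' -> (forall m, m < n -> g m <= h m) ->
  lex_below n f g -> lex_below n' f h.
Proof.
move=> le_nn' le_gh [p [lt_pn le_fg lt_fg]]; exists p; split.
- exact: leq_trans le_nn'.
- by move=> m lt_mp; rewrite (leq_trans (le_fg m lt_mp)) ?le_gh ?(ltn_trans lt_mp).
- exact: leq_trans lt_fg (le_gh p lt_pn).
Qed.

End Lexnum.

Lemma leq_card_bigcup (I T : finType) (D : {pred I}) (F : I -> {set T}) :
  #|\bigcup_(i in D) F i| <= \sum_(i in D) #|F i|.
Proof.
elim/big_rec2: _ => [|i n U _ le_Un]; first by rewrite cards0.
by rewrite (leq_trans (leq_card_setU _ _).1) ?leq_add2l.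
Qed.

Section Reconfiguration.
Variables (T : finType) (e : rel T) (P : {set {set T}}).
Hypothesis e_sym : symmetric e.
Hypothesis e_irr : irreflexive e.
Hypothesis P_part : partition P [set: T].
Hypothesis P_big : forall B, B \in P -> (2 * maxdeg e).+1 <= #|B|.

Local Notation blk := (pblock P).
Local Notation IT := (indep_transversal e P).
Implicit Types (A B C R S X Z : {set T}).

Lemma mem_pblockT x : x \in blk x.
Proof. by case/and3P: P_part => /eqP cover_P _ _; rewrite mem_pblock cover_P inE. Qed.

Lemma pblock_memT x : blk x \in P.
Proof. by case/and3P: P_part => /eqP cover_P _ _; rewrite pblock_mem ?cover_P ?inE. Qed.

Lemma pblock_eq B x : B \in P -> x \in B -> blk x = B.
Proof. exact/def_pblock/partition_trivIset/P_part. Qed.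

Lemma nbhd_le_maxdeg x : #|nbhd e x| <= maxdeg e.
Proof. exact: (@leq_bigmax _ (degree e)). Qed.

Lemma nbhd_swap_sub u C c w : ~~ e u w ->
  nbhd e u :&: (w |: C :\ c) \subset (nbhd e u :&: C) :\ c.
Proof.
move=> nuw; apply/subsetP => v; rewrite !inE.
by case: (eqVneq v w) => [-> | _ /andP[-> /andP[-> ->]]]; rewrite ?(negbTE nuw).
Qed.

Lemma exists_nonadj (W X : {set T}) : #|X| * maxdeg e < #|W| ->
  exists2 w, w \in W & X \subset ~: nbhd e w.
Proof.
move=> ltXW; have /subsetPn[w wW wN] : ~~ (W \subset \bigcup_(x in X) nbhd e x).
  apply: contraTN ltXW => /subset_leq_card leW; rewrite -leqNgt (leq_trans leW) //.
  apply: leq_trans (leq_card_bigcup _ _) _; rewrite -sum_nat_const.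
  by apply: leq_sum => x _; apply: nbhd_le_maxdeg.
exists w => //; apply/subsetP => x xX; rewrite !inE e_sym.
by apply: contra wN => exw; apply/bigcupP; exists x; rewrite ?inE.
Qed.

Lemma independentP S :
  reflect {in S &, forall x y, ~~ e x y} (independent e S).
Proof.
apply: (iffP forall_inP) => [indS x y xS yS | indS x xS].
  exact: (forall_inP (indS x xS)).
by apply/forall_inP => y; apply: indS.
Qed.

Lemma independentS A B : A \subset B -> independent e B -> independent e A.
Proof.
move=> /subsetP sAB /independentP indB.
by apply/independentP => x y /sAB xB /sAB; apply: indB.
Qed.

Lemma independentU A B : independent e A -> independent e B ->
  (forall x, x \in A -> B \subset ~: nbhd e x) -> independent e (A :|: B).
Proof.
move=> /independentP indA /independentP indB nAB.
have nxy x y : x \in A -> y \in B -> ~~ e x y.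
  by move=> xA /(subsetP (nAB x xA)); rewrite !inE.
apply/independentP => x y /setUP[xA|xB] /setUP[yA|yB].
- exact: indA.
- exact: nxy.
- by rewrite e_sym; apply: nxy.
- exact: indB.
Qed.

Definition transversal S := [forall B in P, #|S :&: B| == 1].

Lemma transversalP S : reflect
  ({in S &, injective blk} /\ forall x, exists2 s, s \in S & blk s = blk x)
  (transversal S).
Proof.
apply: (iffP idP) => [trS | [injS coverS]].
  have trPS : is_transversal S P [set: T] by apply/and3P; split; rewrite ?subsetT.
  split=> [|x]; first exact: pblock_inj trPS.
  have : blk x \in blk @: S by rewrite (pblock_transversal trPS) pblock_memT.
  by case/imsetP=> s sS ->; exists s.
apply/forall_inP => B PB; have /set0Pn[x xB] := partition_neq0 P_part PB.
have [s sS blk_sx] := coverS x; apply/cards1P; exists s; apply/setP => t.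
rewrite !inE -(pblock_eq PB xB) -blk_sx.
apply/andP/eqP => [[tS /(pblock_eq (pblock_memT s)) blk_ts] | ->].
  exact: injS.
by rewrite sS mem_pblockT.
Qed.

Lemma transversal_inj S : transversal S -> {in S &, injective blk}.
Proof. by case/transversalP. Qed.

Lemma transversal_cover S x : transversal S -> exists2 s, s \in S & blk s = blk x.
Proof. by case/transversalP=> _; apply. Qed.

Lemma card_transversal_eq S : transversal S -> #|S| = #|P|.
Proof.
move=> trS; apply: (@card_transversal _ _ _ [set: T]).
by apply/and3P; split; rewrite ?subsetT.
Qed.

Lemma transversal_eq R S : transversal R -> transversal S -> R :\: S = set0 -> R = S.
Proof.
move=> trR trS /eqP; rewrite setD_eq0 => sRS; apply/eqP.
by rewrite eqEcard sRS (card_transversal_eq trR) (card_transversal_eq trS) leqnn.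
Qed.

Lemma transversal_swap S x y : transversal S -> x \in S -> blk y = blk x ->
  transversal (y |: S :\ x).
Proof.
case/transversalP=> injS coverS xS blk_yx; apply/transversalP; split=> [u v|z].
  have no_twin t : t \in S :\ x -> blk y = blk t -> False.
    case/setD1P=> tx tS; rewrite blk_yx => /(injS _ _ xS tS) xt.
    by rewrite xt eqxx in tx.
  move=> /setU1P[-> | uSx] /setU1P[-> | vSx] //.
  - by move/(no_twin _ vSx).
  - by move/esym/(no_twin _ uSx).
  - by apply: injS; [case/setD1P: uSx | case/setD1P: vSx].
have [s sS <-] := coverS z; have [-> | sx] := eqVneq s x.
  by exists y; rewrite ?setU11.
by exists s; rewrite // !inE sx sS orbT.
Qed.

Lemma transversal_mix (F : {set {set T}}) R S : transversal R -> transversal S ->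
  transversal [set z | if blk z \in F then z \in S else z \in R].
Proof.
move=> /forall_inP trR /forall_inP trS; apply/forall_inP => B PB.
suff -> : [set z | if blk z \in F then z \in S else z \in R] :&: B =
          (if B \in F then S else R) :&: B by case: ifP => _; [apply: trS | apply: trR].
apply/setP => z; rewrite !inE.
have [zB | _] := boolP (z \in B); last by rewrite !andbF.
by rewrite (pblock_eq PB zB); case: ifP.
Qed.

Definition rg_edge S S' := [&& IT S, IT S' & RG_adj e P S S'].
Definition linked := connect rg_edge.

Lemma linked_sym S S' : linked S S' = linked S' S.
Proof.
by apply: sym_connect_sym => S1 S2; rewrite /rg_edge /RG_adj setUC andbCA.
Qed.

Lemma rg_edge_swap S x y : IT S -> x \in S -> blk y = blk x -> y != x ->
  S \subset ~: nbhd e y -> rg_edge S (y |: S :\ x).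
Proof.
move=> /andP[indS trS] xS blk_yx yx nyS.
have yS : y \notin S.
  by apply: contra yx => yS; apply/eqP/(transversal_inj trS).
have indyS : independent e (y |: S).
  apply: independentU => // [|_ /set1P->//].
  by apply/independentP => _ _ /set1P-> /set1P->; rewrite e_irr.
rewrite /rg_edge /RG_adj.
have -> : S :|: (y |: S :\ x) = y |: S.
  by apply/setP => z; rewrite !inE; case: (z == y); case: (z == x); case: (z \in S).
rewrite indyS cardsU1 yS (card_transversal_eq trS) eqxx !andbT.
apply/andP; split; first exact/andP.
apply/andP; split; last exact: transversal_swap.
by apply: independentS indyS; apply/setUS/subsetDl.
Qed.

Lemma linked_indepU S S' : IT S -> IT S' -> independent e (S :|: S') -> linked S S'.
Proof.
move=> IS IS'; have [n] := ubnP #|S :\: S'|.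
elim: n S IS => // n IHn S IS ltSn indSS'.
have [/andP[_ trS] /andP[_ trS']] := (IS, IS').
have [/(transversal_eq trS trS')-> | ] := eqVneq (S :\: S') set0; first exact: connect0.
case/set0Pn=> x /setDP[xS xS']; have [s sS' blk_sx] := transversal_cover x trS'.
have sx : s != x by apply: contraNneq xS' => <-.
have nsS : S \subset ~: nbhd e s.
  apply/subsetP => t tS; rewrite !inE.
  by apply: (independentP _ indSS'); rewrite inE ?sS' ?tS ?orbT.
have edge := rg_edge_swap IS xS blk_sx sx nsS.
apply: connect_trans (connect1 edge) _; apply: IHn; first by case/and3P: edge.
  rewrite -ltnS; apply: leq_trans ltSn; rewrite ltnS; apply/proper_card.
  apply: sub_proper_trans (properD1 (_ : x \in S :\: S')); last by rewrite inE xS xS'.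
  apply/subsetP => t; rewrite !inE => /andP[tS' /orP[/eqP ts | /andP[-> ->]]].
    by rewrite ts sS' in tS'.
  by rewrite tS'.
apply: independentS indSS'; apply/subsetP => t; rewrite !inE.
by case/orP=> [/orP[/eqP-> | /andP[_ ->]] | ->]; rewrite ?sS' ?orbT.
Qed.

Section DifferenceInduction.
Variable d : nat.
Hypothesis IHd : forall R S, IT R -> IT S -> #|R :\: S| < d -> linked R S.

Lemma linked_isolated R S x : IT R -> IT S -> #|R :\: S| <= d ->
  x \in R :\: S -> S \subset ~: nbhd e x -> linked R S.
Proof.
move=> IR IS leRSd xRS nxS; have [/andP[indR trR] /andP[indS trS]] := (IR, IS).
(* M keeps the vertex of R on the blocks where it has no neighbour in S and
   takes the vertex of S elsewhere; x stays, so M is closer to R than S is. *)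
pose F := [set blk r | r in R & ~~ (S \subset ~: nbhd e r)].
pose M := [set z | if blk z \in F then z \in S else z \in R].
have hitF z : z \in R -> (blk z \in F) = ~~ (S \subset ~: nbhd e z).
  move=> zR; apply/imsetP/idP => [[r] | hit]; last by exists z; rewrite ?inE ?zR.
  by rewrite inE => /andP[rR hit] /(transversal_inj trR zR rR)->.
have indMS : independent e (M :|: S).
  apply: (@independentS _ ([set z in R | S \subset ~: nbhd e z] :|: S)).
    rewrite subUset subsetUr andbT; apply/subsetP => z; rewrite !inE.
    by case: ifP => [_ -> | /negbT + zR]; rewrite ?orbT // hitF // negbK zR => ->.
  apply: independentU => // [|z]; last by rewrite inE => /andP[].
  by apply: independentS indR; apply/subsetP => z; rewrite inE => /andP[].
have IM : IT M.
  rewrite /indep_transversal (independentS (subsetUl M S) indMS).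
  exact: transversal_mix.
apply: connect_trans (linked_indepU IM IS indMS); apply: IHd => //.
apply: leq_trans leRSd; apply/proper_card/(sub_proper_trans _ (properD1 xRS)).
apply/subsetP => z; rewrite !inE.
case: ifP => [zF /andP[zS zR] | _]; last by rewrite andNb.
rewrite zS zR /= andbT; apply: contraTneq zF => ->.
by rewrite hitF ?negbK //; case/setDP: xRS.
Qed.

Lemma linked_free_in_block R S x w : IT R -> IT S -> #|R :\: S| <= d ->
  x \in R :\: S -> blk w = blk x -> R :|: S \subset ~: nbhd e w -> linked R S.
Proof.
move=> IR IS leRSd xRS blk_wx; rewrite subUset => /andP[nwR nwS].
have [wx | wx] := eqVneq w x.
  by rewrite wx in nwS; apply: linked_isolated leRSd xRS nwS.
have edge := rg_edge_swap IR (setDP xRS).1 blk_wx wx nwR.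
have IR1 : IT (w |: R :\ x) by case/and3P: edge.
apply: connect_trans (connect1 edge) _.
have sub : (w |: R :\ x) :\: S \subset w |: ((R :\: S) :\ x).
  by apply/subsetP => z; rewrite !inE; case: (z == w) => //= /andP[-> /andP[-> ->]].
have [wS | wS] := boolP (w \in S).
  apply: IHd IR1 IS _; apply: leq_trans leRSd; apply/proper_card.
  apply: sub_proper_trans (properD1 xRS); apply/subsetP => z zR1.
  by have /setU1P[zw | //] := subsetP sub z zR1; case/setDP: zR1; rewrite zw wS.
apply: (linked_isolated (x := w)) IR1 IS _ _ nwS; last by rewrite !inE eqxx wS.
apply: leq_trans leRSd; apply: leq_trans (subset_leq_card sub) _.
by rewrite cardsU1 (cardsD1 x (R :\: S)) xRS leq_add2r leq_b1.
Qed.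

End DifferenceInduction.

Lemma exists_free_in_blocks Z X : {in Z &, injective blk} -> 0 < #|Z| ->
  #|X| <= 2 * #|Z| -> exists2 w, blk w \in blk @: Z & X \subset ~: nbhd e w.
Proof.
move=> injZ Z_gt0 leXZ.
have ZP : blk @: Z \subset P by apply/subsetP => _ /imsetP[z _ ->]; apply: pblock_memT.
have big_cover : #|Z| * (2 * maxdeg e).+1 <= #|cover (blk @: Z)|.
  rewrite -(eqP (trivIsetS ZP (partition_trivIset P_part))) -(card_in_imset injZ).
  by rewrite -sum_nat_const; apply: leq_sum => B /(subsetP ZP); apply: P_big.
have [|w /bigcupP[_ /imsetP[z zZ ->] wz] nwX] := @exists_nonadj (cover (blk @: Z)) X.
  by apply: leq_trans big_cover; nia.
by exists w; rewrite // (pblock_eq (pblock_memT z) wz) imset_f.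
Qed.

Section Chains.
Variable d : nat.
Hypothesis IHd : forall R S, IT R -> IT S -> #|R :\: S| < d -> linked R S.
Variables A A' : {set T}.
Hypothesis d_gt0 : 0 < d.
Hypothesis card_A : #|A| = d.
Hypothesis card_A' : #|A'| = d.
Hypothesis disj_AA' : [disjoint A & A'].
Hypothesis blk_AA' : blk @: A = blk @: A'.

Definition core C := IT (A :|: C) && IT (A' :|: C).
Definition core_linked C := linked (A :|: C) (A' :|: C).

Lemma core_disjoint C : core C -> [disjoint A :|: A' & C].
Proof.
case/andP=> /andP[_ trAC] /andP[_ trA'C].
have twin_notin X Y z : transversal (Y :|: C) -> [disjoint X & Y] ->
    blk @: X = blk @: Y -> z \in X -> z \notin C.
  move=> trYC disXY blkXY zX; have /imsetP[y yY blk_zy] : blk z \in blk @: Y.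
    by rewrite -blkXY imset_f.
  apply/negP => zC.
  have zy : z = y by apply: (transversal_inj trYC); rewrite // !inE ?zC ?yY ?orbT.
  by move: (disjointFr disXY zX); rewrite zy yY.
rewrite disjoints_subset; apply/subsetP => z; rewrite !inE => /orP[zA | zA'].
  exact: twin_notin trA'C disj_AA' blk_AA' zA.
by apply: twin_notin trAC _ (esym blk_AA') zA'; rewrite disjoint_sym.
Qed.

Lemma core_linked_free_in_A C z w : core C -> z \in A -> blk w = blk z ->
  A :|: A' :|: C \subset ~: nbhd e w -> core_linked C.
Proof.
move=> coreC zA blk_wz nw; have /andP[IAC IA'C] := coreC.
rewrite /core_linked; apply: (linked_free_in_block (x := z) (w := w) IHd IAC IA'C) => //.
- rewrite -card_A; apply/subset_leq_card/subsetP => u; rewrite !inE.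
  by case: (u \in C); rewrite ?orbT ?orbF //= => /andP[].
- rewrite !inE zA (disjointFr disj_AA' zA) /=.
  by rewrite (disjointFr (core_disjoint coreC)) // inE zA.
- apply: subset_trans nw; apply/subsetP => u; rewrite !inE -!orbA.
  by case/or4P=> ->; rewrite ?orbT.
Qed.

Lemma core_swap C c w : core C -> c \in C -> blk w = blk c -> w != c ->
  A :|: A' :|: C \subset ~: nbhd e w ->
  core (w |: C :\ c) /\ (core_linked (w |: C :\ c) -> core_linked C).
Proof.
move=> coreC cC blk_wc wc nw; have /andP[IAC IA'C] := coreC.
have edge X : IT (X :|: C) -> X \subset A :|: A' ->
    rg_edge (X :|: C) (X :|: (w |: C :\ c)).
  move=> IXC sX; have cX : c \notin X.
    apply: contraTN cC => /(subsetP sX) cAA'.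
    by rewrite (disjointFr (core_disjoint coreC)).
  have -> : X :|: (w |: C :\ c) = w |: (X :|: C) :\ c.
    apply/setP => u; rewrite !inE; have [-> | uc] := eqVneq u c.
      by rewrite (negbTE cX) eq_sym (negbTE wc).
    by case: (u \in X); case: (u == w); case: (u \in C);
      rewrite /= ?uc ?andbT ?andbF ?orbT ?orbF.
  apply: rg_edge_swap IXC _ blk_wc wc _; first by rewrite inE cC orbT.
  by apply: subset_trans nw; apply: setSU.
have eA := edge A IAC (subsetUl _ _); have eA' := edge A' IA'C (subsetUr _ _).
split; first by rewrite /core; case/and3P: eA => _ -> _; case/and3P: eA' => _ -> _.
move=> linked1; apply: connect_trans (connect1 eA) _.
by apply: connect_trans linked1 (_ : linked _ _); rewrite linked_sym; apply: connect1.
Qed.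

Implicit Type s : seq (T * T).

Definition ys s := [set y in unzip1 s].
Definition cs s := [set c in unzip2 s].

Definition chain_step C s (p : T * T) :=
  [&& p.2 \in C, e p.1 p.2, A :|: A' :|: ys s :|: cs s \subset ~: nbhd e p.1
    & blk p.1 \in blk @: (A :|: cs s)].

(* Chains are stored newest pair first. *)
Fixpoint chain C s := if s is p :: s' then chain_step C s' p && chain C s' else true.

Lemma chain_suffix C s1 s2 : chain C (s2 ++ s1) -> chain C s1.
Proof. by elim: s2 => //= p s2 IHs2 /andP[_ /IHs2]. Qed.

Lemma chain_subset C C' s : chain C s -> cs s \subset C' -> chain C' s.
Proof.
elim: s => //= -[y c] s IHs /andP[/and4P[_ eyc ny blk_y] ch_s] sub.
have cC' : c \in C' by apply: (subsetP sub); rewrite !inE eqxx.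
rewrite /chain_step /= cC' eyc ny blk_y IHs //.
by apply: subset_trans sub; apply/subsetP => u; rewrite !inE => ->; rewrite orbT.
Qed.

Lemma chain_cs_sub C s : chain C s -> cs s \subset C.
Proof.
elim: s => [|[y c] s IHs] /=.
  by rewrite /cs /= => _; apply/subsetP => u; rewrite inE.
case/andP=> /and4P[/= cC _ _ _] /IHs sub; apply/subsetP => u; rewrite !inE.
by case/orP=> [/eqP-> // | u_s]; apply: (subsetP sub); rewrite inE.
Qed.

Lemma chain_uniq C s : chain C s -> uniq (unzip2 s).
Proof.
elim: s => //= -[y c] s IHs /andP[/and4P[/= _ eyc ny _] /IHs->]; rewrite andbT.
apply: contraL eyc => c_s; have : c \in cs s by rewrite inE.
by move/(subsetP (subset_trans (subsetUr _ _) ny)); rewrite !inE.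
Qed.

Lemma card_cs C s : chain C s -> #|cs s| = size s.
Proof. by move/chain_uniq/card_uniqP; rewrite cardsE size_map. Qed.

Lemma ys_cat s1 s2 : ys (s2 ++ s1) = ys s2 :|: ys s1.
Proof. by apply/setP => u; rewrite !inE /unzip1 map_cat mem_cat. Qed.

Lemma card_ys s : #|ys s| <= size s.
Proof. by rewrite cardsE -(size_map fst); apply: card_size. Qed.

Lemma chain_size C s : chain C s -> size s <= #|T|.
Proof. by move/card_cs<-; apply: max_card. Qed.

(* Digit m counts the neighbours in C of the m-th oldest y of the chain; past
   the end it is maxdeg + 1, so extending a chain makes its digits smaller. *)
Definition digit C s m :=
  nth (maxdeg e).+1 [seq #|nbhd e p.1 :&: C| | p <- rev s] m.

Lemma digit_lt C s m : digit C s m < (maxdeg e).+2.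
Proof.
rewrite /digit; set ks := map _ _; have [lt_m | ge_m] := ltnP m (size ks).
  have /mapP[p _ ->] := mem_nth (maxdeg e).+1 lt_m; rewrite ltnS; apply: leqW.
  exact: leq_trans (subset_leq_card (subsetIl _ _)) (nbhd_le_maxdeg _).
by rewrite nth_default.
Qed.

Lemma digit_cat C s1 s2 m : m < size s1 -> digit C (s2 ++ s1) m = digit C s1 m.
Proof. by move=> lt_m; rewrite /digit rev_cat map_cat nth_cat size_map size_rev lt_m. Qed.

Lemma digit_head C s p : digit C (p :: s) (size s) = #|nbhd e p.1 :&: C|.
Proof. by rewrite /digit rev_cons map_rcons nth_rcons size_map size_rev ltnn eqxx. Qed.

Lemma digit_default C s : digit C s (size s) = (maxdeg e).+1.
Proof. by rewrite /digit nth_default ?size_map ?size_rev. Qed.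

Lemma digit_le C C' s m :
    {in ys s, forall y, #|nbhd e y :&: C'| <= #|nbhd e y :&: C|} ->
  digit C' s m <= digit C s m.
Proof.
move=> le_C'C; rewrite /digit; have [ge_m | lt_m] := leqP (size (rev s)) m.
  by rewrite !nth_default ?size_map.
case: s le_C'C lt_m => [//|p s] le_C'C lt_m; rewrite !(nth_map p) //.
by apply: le_C'C; rewrite inE; apply: map_f; rewrite -mem_rev mem_nth.
Qed.

Definition weight C s := lexnum (maxdeg e).+2 #|T| (digit C s).

Lemma weight_lt C s C' s' : lex_below #|T| (digit C' s') (digit C s) ->
  weight C' s' < weight C s.
Proof. exact/lexnum_lt/digit_lt. Qed.

Lemma nonadj_extend C s u : A :|: A' :|: ys s :|: cs s \subset ~: nbhd e u ->
  nbhd e u :&: C = set0 -> A :|: A' :|: C :|: ys s \subset ~: nbhd e u.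
Proof.
move=> nu N0; apply: subset_trans (_ : _ \subset (A :|: A' :|: ys s :|: cs s) :|: C) _.
  apply/subsetP => v; rewrite !inE.
  by case/orP=> [/orP[/orP[->|->]|->]|->]; rewrite ?orbT.
by rewrite subUset nu -disjoints_subset -setI_eq0 setIC N0 eqxx.
Qed.

Lemma card_chain_support C s : chain C s ->
  #|A :|: A' :|: ys s :|: cs s| <= 2 * (d + size s).
Proof.
move=> ch_s.
have leU (X Y : {set T}) : #|X :|: Y| <= #|X| + #|Y| := (leq_card_setU X Y).1.
have := leU (A :|: A' :|: ys s) (cs s); have := leU (A :|: A') (ys s).
have := leU A A'; have := card_ys s; rewrite card_A card_A' (card_cs ch_s); lia.
Qed.

Lemma chain_swap C w y c s1 s2 : chain C (s2 ++ (y, c) :: s1) ->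
    ys (s2 ++ (y, c) :: s1) \subset ~: nbhd e w ->
  [/\ chain (w |: C :\ c) s1,
      forall m, m < size s1 ->
        digit (w |: C :\ c) s1 m <= digit C (s2 ++ (y, c) :: s1) m
    & #|nbhd e y :&: (w |: C :\ c)| < digit C (s2 ++ (y, c) :: s1) (size s1)].
Proof.
move=> ch_s nw; have /andP[/and4P[/= cC eyc ny _] ch_s1] := chain_suffix ch_s.
have nw_ys u : u \in ys (s2 ++ (y, c) :: s1) -> ~~ e u w.
  by move/(subsetP nw); rewrite !inE e_sym.
have c_s1 : c \notin cs s1.
  by apply: contraL eyc => /(subsetP (subset_trans (subsetUr _ _) ny)); rewrite !inE.
split.
- apply: (chain_subset ch_s1); apply/subsetP => u u_s1; rewrite !inE.
  rewrite (subsetP (chain_cs_sub ch_s1)) // andbT; apply/orP; right.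
  by apply: contraNneq c_s1 => <-.
- move=> m lt_m; rewrite -cat1s catA digit_cat //; apply: digit_le => u u_s1.
  apply/subset_leq_card/(subset_trans (nbhd_swap_sub C c _))/subsetDl; apply: nw_ys.
  by rewrite -cat1s catA ys_cat inE u_s1 orbT.
- have nyw : ~~ e y w by apply: nw_ys; rewrite ys_cat !inE eqxx orbT.
  rewrite digit_cat // digit_head; apply/proper_card.
  apply: sub_proper_trans (nbhd_swap_sub C c nyw) (properD1 _).
  by rewrite !inE eyc.
Qed.

Lemma core_linked_free_in_chain s C w : core C -> chain C s ->
    A :|: A' :|: C :|: ys s \subset ~: nbhd e w -> blk w \in blk @: (A :|: cs s) ->
    (forall C' s', core C' -> chain C' s' ->
       lex_below (size s) (digit C' s') (digit C s) -> core_linked C') ->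
  core_linked C.
Proof.
(* w replaces the blocker c of the pair (y, c) in the block of w.  If y still
   has a neighbour in the new core, the truncated chain is re-extended by y;
   otherwise y plays the role of w for the truncated chain. *)
have [n] := ubnP (size s); elim: n s C w => // n IHn s C w lt_sn coreC ch_s nw.
case/imsetP=> z /setUP[zA | z_cs] blk_wz smaller.
  apply: core_linked_free_in_A coreC zA blk_wz _.
  by apply: subset_trans nw; apply: subsetUl.
move: z_cs; rewrite inE => /mapP[[y c] yc_s /= z_c]; subst z.
case/splitPr: yc_s lt_sn ch_s nw smaller => s2 s1 lt_sn ch_s nw smaller.
have /andP[/and4P[/= cC eyc ny blk_y] _] := chain_suffix ch_s.
have nw_ys := subset_trans (subsetUr _ _) nw.
have nwy : ~~ e w y by have := subsetP nw_ys y; rewrite ys_cat !inE eqxx orbT => /(_ isT).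
have wc : w != c by apply: contraTneq eyc => <-; rewrite e_sym.
have [coreC1 back] := core_swap coreC cC blk_wz wc (subset_trans (subsetUl _ _) nw).
have [ch_s1 le_prefix lt_y] := chain_swap ch_s nw_ys.
apply: back; set C1 := w |: C :\ c in coreC1 ch_s1 le_prefix lt_y *.
have lt_s1 : size s1 < size (s2 ++ (y, c) :: s1).
  by rewrite size_cat /= addnS ltnS leq_addl.
have [N0 | [c' c'N]] := set_0Vmem (nbhd e y :&: C1).
  apply: (IHn s1 C1 y) => //.
  - by rewrite -ltnS (leq_trans _ lt_sn).
  - exact: nonadj_extend.
  - move=> C' s' coreC' ch_s' lt_s'; apply: smaller coreC' ch_s' _.
    by apply: lex_below_widen lt_s'; rewrite // ltnW.
apply: (smaller C1 ((y, c') :: s1)) => //.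
  case/setIP: c'N; rewrite /= inE => eyc' c'C1.
  by rewrite /chain_step /= eyc' c'C1 ny blk_y ch_s1.
exists (size s1); split=> //.
- by move=> m lt_m; rewrite -cat1s digit_cat //; apply: le_prefix.
- by rewrite digit_head.
Qed.

Lemma core_linked_of_chain C s : core C -> chain C s -> core_linked C.
Proof.
have [n] := ubnP (weight C s); elim: n C s => // n IHn C s lt_wn coreC ch_s.
have smaller C' s' : core C' -> chain C' s' ->
    lex_below #|T| (digit C' s') (digit C s) -> core_linked C'.
  move=> coreC' ch_s' /weight_lt lt_w; apply: IHn coreC' ch_s'.
  exact: leq_trans lt_w lt_wn.
have /andP[/andP[_ trAC] _] := coreC; have cs_C := chain_cs_sub ch_s.
have disj_Acs : [disjoint A & cs s].
  exact: disjointW (subsetUl A A') cs_C (core_disjoint coreC).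
have injZ : {in A :|: cs s &, injective blk}.
  move=> u v /(subsetP (setUS A cs_C)) uAC /(subsetP (setUS A cs_C)) vAC.
  exact: (transversal_inj trAC).
have card_Z : #|A :|: cs s| = d + size s.
  by rewrite cardsU (disjoint_setI0 disj_Acs) cards0 subn0 card_A (card_cs ch_s).
have card_X := card_chain_support ch_s; rewrite -card_Z in card_X.
have [|w blk_w nwX] := exists_free_in_blocks injZ _ card_X.
  by rewrite card_Z addn_gt0 d_gt0.
have [/set0Pn[c /setIP[wc cC]] | /negPn/eqP N0] := boolP (nbhd e w :&: C != set0).
  have ch_ws : chain C ((w, c) :: s).
    by rewrite inE in wc; rewrite /= /chain_step /= cC wc nwX blk_w ch_s.
  apply: (smaller C ((w, c) :: s)) => //; exists (size s); split.
  - exact: chain_size ch_ws.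
  - by move=> m lt_m; rewrite -cat1s digit_cat.
  - rewrite digit_head digit_default ltnS.
    exact: leq_trans (subset_leq_card (subsetIl _ _)) (nbhd_le_maxdeg _).
apply: (core_linked_free_in_chain coreC ch_s (nonadj_extend nwX N0) blk_w).
move=> C' s' coreC' ch_s' lt_s'; apply: smaller coreC' ch_s' _.
exact: lex_below_widen (chain_size ch_s) (fun _ _ => leqnn _) lt_s'.
Qed.

End Chains.

Lemma pblock_setD_sub R S : transversal R -> transversal S ->
  blk @: (R :\: S) \subset blk @: (S :\: R).
Proof.
move=> trR trS; apply/subsetP => _ /imsetP[x /setDP[xR xS] ->].
have [y yS blk_yx] := transversal_cover x trS.
apply/imsetP; exists y => //; rewrite inE yS andbT; apply: contra xS => yR.
by rewrite -(transversal_inj trR yR xR blk_yx).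
Qed.

Lemma linked_transversals R S : IT R -> IT S -> linked R S.
Proof.
move Ed : #|R :\: S| => d; elim/ltn_ind: d R S Ed => d IHd R S Ed IR IS.
have IH R' S' : IT R' -> IT S' -> #|R' :\: S'| < d -> linked R' S'.
  by move=> IR' IS' lt_d; apply: IHd lt_d _ _ erefl IR' IS'.
have [/andP[_ trR] /andP[_ trS]] := (IR, IS).
have [d0 | d_gt0] := posnP d.
  have /(transversal_eq trR trS)-> : R :\: S = set0.
    by apply/eqP; rewrite -cards_eq0 Ed d0.
  exact: connect0.
have card_SR : #|S :\: R| = d.
  by rewrite -Ed !cardsD (card_transversal_eq trR) (card_transversal_eq trS) setIC.
have disj : [disjoint R :\: S & S :\: R].
  by rewrite disjoints_subset; apply/subsetP => z; rewrite !inE => /andP[_ ->].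
have blk_RS : blk @: (R :\: S) = blk @: (S :\: R).
  by apply/eqP; rewrite eqEsubset !pblock_setD_sub.
have ER : R :\: S :|: R :&: S = R by rewrite setUC setID.
have ES : S :\: R :|: R :&: S = S by rewrite setIC setUC setID.
have coreC : core (R :\: S) (S :\: R) (R :&: S) by rewrite /core ER ES IR IS.
have := core_linked_of_chain IH d_gt0 Ed card_SR disj blk_RS coreC
  (isT : chain _ _ _ [::]).
by rewrite /core_linked ER ES.
Qed.

Lemma rg_edge_path S p :
  path rg_edge S p -> path (RG_adj e P) S p /\ all IT p.
Proof.
elim: p S => //= S' p IHp S /andP[/and3P[_ IS' adjSS'] /IHp[path_p IT_p]].
by rewrite adjSS' IS'.
Qed.

End Reconfiguration.

Theorem corollary6p3 (T : finType) (e : rel T) (P : {set {set T}}) :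
  symmetric e -> irreflexive e ->
  partition P [set: T] ->
  (forall B, B \in P -> (2 * maxdeg e).+1 <= #|B|) ->
  RG_connected e P.
Proof.
move=> e_sym e_irr P_part P_big S S' IS IS'.
have /connectP[p /rg_edge_path[path_p IT_p] ->] :=
  linked_transversals e_sym e_irr P_part P_big IS IS'.
by exists p.
Qed.
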